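(* Let $n\ge1$, $k\ge2$, $\gamma=((i_1\,j_1),\dots,(i_k\,j_k))\in\Sigma_n(k)$ and $l\in\{1,\dots,k-1\}$. Then $\sigma_l\cdot\gamma\in\Sigma_n(k)$ and $P(\sigma_l\cdot\gamma)=\sigma_l\cdot P(\gamma)$. Moreover, writing $\sigma_l\cdot\gamma=((i_{\sigma_l^{-1}(1)}\,\tilde j_1),\dots,(i_{\sigma_l^{-1}(k)}\,\tilde j_k))$, one has $\bigcup_{s=1}^k\{i_s,j_s\}=\bigcup_{s=1}^k\{i_s,\tilde j_s\}$.
   Context: Let $n\ge1$. $\mathfrak S_n$ is the symmetric group on $\{1,\dots,n\}$; products are composed right to left. $\mathsf T_n$ is the set of transpositions; a transposition is always written $(i\,j)$ with $i<j$. For $\sigma\in\mathfrak S_n$, $|\sigma|=n-(\text{number of cycles of }\sigma\text{, fixed points counted})$; $\sigma_1\preccurlyeq\sigma_2$ iff $|\sigma_2|=|\sigma_1|+|\sigma_1^{-1}\sigma_2|$. $\Sigma_n(k)=\{(\tau_1,\dots,\tau_k)\in(\mathsf T_n)^k : |\tau_1\cdots\tau_k|=k,\ \tau_1\cdots\tau_k\preccurlyeq(1\,2\,\dots\,n)\}$. $P:\Sigma_n(k)\to\{1,\dots,n-1\}^k$ sends $((i_1\,j_1),\dots,(i_k\,j_k))$ to $(i_1,\dots,i_k)$. The group $\mathfrak S_k$ acts on sequences by $\pi\cdot(x_1,\dots,x_k)=(x_{\pi^{-1}(1)},\dots,x_{\pi^{-1}(k)})$. Let $\sigma_l=(l\;l+1)\in\mathfrak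 S_k$. For $(g_1,\dots,g_k)\in(\mathsf T_n)^k$ define $\beta_l\cdot(g_1,\dots,g_k)=(g_1,\dots,g_{l-1},g_{l+1},g_{l+1}^{-1}g_lg_{l+1},g_{l+2},\dots,g_k)$ and $\beta_l^{-1}\cdot(g_1,\dots,g_k)=(g_1,\dots,g_{l-1},g_lg_{l+1}g_l^{-1},g_l,g_{l+2},\dots,g_k)$. For $\gamma=((i_1\,j_1),\dots,(i_k\,j_k))\in\Sigma_n(k)$ define $\sigma_l\cdot\gamma=\gamma$ if $i_l=i_{l+1}$, $\sigma_l\cdot\gamma=\beta_l\cdot\gamma$ if $i_l<i_{l+1}$, and $\sigma_l\cdot\gamma=\beta_l^{-1}\cdot\gamma$ if $i_l>i_{l+1}$. *)

(* Points {1..n} are encoded 0-based as 'I_n. *)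
From HB Require Import structures.
From mathcomp Require Import all_boot all_order all_fingroup.
Set Implicit Arguments. Unset Strict Implicit. Unset Printing Implicit Defensive.

Local Open Scope group_scope.

(* Paper product tau_1 ... tau_k, composed right to left:
   (tau_1 ... tau_k)(x) = tau_1(... tau_k(x)).  In MathComp, (s * t) x = t (s x),
   so the paper product is tau_k * ... * tau_1. *)
Fixpoint pprod n (s : seq {perm 'I_n}) : {perm 'I_n} :=
  if s is t :: s' then pprod s' * t else 1.

(* paper composition  a b  (apply b first, then a) *)
Definition pcomp n (a b : {perm 'I_n}) : {perm 'I_n} := b * a.

(* |sigma| = n - number of cycles (fixed points counted) *)
Definition plen n (s : {perm 'I_n}) : nat := n - #|porbits s|.

Definition pleq n (s1 s2 : {perm 'I_n}) : Prop :=
  plen s2 = plen s1 + plen (pcomp s1^-1 s2).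

(* the long cycle (1 2 ... n): i |-> i+1 mod n (0-based) *)
Definition longcycle n : {perm 'I_n} := perm (@ordS_inj n).

Definition is_transp n (t : {perm 'I_n}) : bool :=
  [exists i : 'I_n, exists j : 'I_n, (i < j)%N && (t == tperm i j)].

Definition Sigma n k (g : seq {perm 'I_n}) : Prop :=
  [/\ size g = k, all (@is_transp n) g, plen (pprod g) = k
    & pleq (pprod g) (longcycle n)].

(* for a transposition (i j), i < j : tmin = i, tmax = j (as naturals) *)
Definition tmin n (t : {perm 'I_n}) : nat :=
  head 0%N [seq val x | x <- enum 'I_n & t x != x].
Definition tmax n (t : {perm 'I_n}) : nat :=
  last 0%N [seq val x | x <- enum 'I_n & t x != x].

Definition P n (g : seq {perm 'I_n}) : seq nat := [seq tmin t | t <- g].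

Definition sact T (x0 : T) k (pi : {perm 'I_k}) (s : seq T) : seq T :=
  [seq nth x0 s (pi^-1 i) | i <- enum 'I_k].

(* braid generators beta_l, beta_l^{-1} (l 0-based: acts on positions l, l+1) *)
Definition beta n (l : nat) (g : seq {perm 'I_n}) : seq {perm 'I_n} :=
  let gl := nth 1 g l in let gl1 := nth 1 g l.+1 in
  take l g ++ [:: gl1; pcomp (pcomp gl1^-1 gl) gl1] ++ drop l.+2 g.
Definition betainv n (l : nat) (g : seq {perm 'I_n}) : seq {perm 'I_n} :=
  let gl := nth 1 g l in let gl1 := nth 1 g l.+1 in
  take l g ++ [:: pcomp (pcomp gl gl1) gl^-1; gl] ++ drop l.+2 g.

Definition sigact n (l : nat) (g : seq {perm 'I_n}) : seq {perm 'I_n} :=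
  let il := tmin (nth 1 g l) in let il1 := tmin (nth 1 g l.+1) in
  if il == il1 then g else if (il < il1)%N then beta l g else betainv l g.

(* the set  U_s {i_s, j_s}  as a membership predicate on nat *)
Definition tsupp n (g : seq {perm 'I_n}) : seq nat :=
  flatten [seq [:: tmin t; tmax t] | t <- g].

From Pilot Require Import Defs.
From mathcomp Require Import all_boot all_order all_fingroup.
From mathcomp Require Import zify.
Set Implicit Arguments. Unset Strict Implicit. Unset Printing Implicit Defensive.

(* The move sigma_l only touches the adjacent entries X = (u v) and Y = (c d)
   at positions l and l+1 of gamma = pre ++ X :: Y :: post: it replaces them
   by a pair (X', Y') -- (X, Y) itself, (Y, Y X Y^-1) for beta_l, or
   (X^-1 Y X, X) for beta_l^-1 -- with three local properties, gathered in the
   record hurwitz_pair: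
   - X', Y' are transpositions with the same product as X, Y, so the paper
     product tau_1 ... tau_k, hence membership in Sigma_n(k), is unchanged;
   - the smaller points are exchanged (tmin X' = tmin Y, tmin Y' = tmin X),
     which gives P(sigma_l.gamma) = sigma_l.P(gamma);
   - the union of the supports {u, v, c, d} is unchanged.
   The first section proves the facts about transpositions behind this: the
   exchange of the smaller points comes from the fact that conjugating (u v)
   by (c d) with u < c fixes u and sends v above u. *)

Local Open Scope group_scope.

Section Transpositions.
Variable n : nat.
Implicit Types (u v c d : 'I_n) (t : {perm 'I_n}).

Lemma ord_ltn_neq u v : (u < v)%N -> u != v.
Proof. by move=> lt_uv; rewrite -(inj_eq val_inj) neq_ltn lt_uv. Qed.

Lemma moved_tperm u v : (u < v)%N ->
  [seq val y | y <- enum 'I_n & tperm u v y != y] = [:: val u; val v].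
Proof.
move=> lt_uv; have neq_uv := ord_ltn_neq lt_uv.
have sorted_moved : sorted ltn [seq val y | y <- enum 'I_n & tperm u v y != y].
  apply: (@subseq_sorted _ _ ltn_trans _ [seq val y | y <- enum 'I_n]).
    exact/map_subseq/filter_subseq.
  by rewrite val_enum_ord iota_ltn_sorted.
apply: (irr_sorted_eq ltn_trans ltnn sorted_moved); first by rewrite /= andbT.
move=> x; rewrite !inE; apply/mapP/idP => [[y]|/orP[]/eqP->].
- rewrite mem_filter; case: tpermP => [->|->|_ _]; rewrite ?eqxx //.
  + by move=> _ ->; rewrite eqxx.
  + by move=> _ ->; rewrite eqxx orbT.
- by exists u; rewrite // mem_filter tpermL eq_sym neq_uv mem_enum.
- by exists v; rewrite // mem_filter tpermR neq_uv mem_enum.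
Qed.

Lemma tmin_tperm u v : (u < v)%N -> tmin (tperm u v) = u.
Proof. by move=> lt_uv; rewrite /tmin moved_tperm. Qed.

Lemma tmax_tperm u v : (u < v)%N -> tmax (tperm u v) = v.
Proof. by move=> lt_uv; rewrite /tmax moved_tperm. Qed.

Lemma is_transpP t : is_transp t -> exists u v, (u < v)%N /\ t = tperm u v.
Proof. by case/existsP=> u /existsP [v /andP [lt_uv /eqP ->]]; exists u, v. Qed.

Lemma is_transp_tperm u v : u != v -> is_transp (tperm u v).
Proof.
rewrite -(inj_eq val_inj) neq_ltn => /orP [] lt; apply/existsP.
- by exists u; apply/existsP; exists v; rewrite lt eqxx.
- by exists v; apply/existsP; exists u; rewrite lt tpermC eqxx.
Qed.

Lemma is_transp_conj t s : is_transp t -> is_transp s -> is_transp (t ^ s).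
Proof.
case/is_transpP=> u [v [lt_uv ->]] _; rewrite tpermJ.
by apply: is_transp_tperm; rewrite (inj_eq perm_inj) ord_ltn_neq.
Qed.

Lemma tmin_conj u v c d : (u < v)%N -> (c < d)%N -> (u < c)%N ->
  tmin (tperm u v ^ tperm c d) = u.
Proof.
move=> lt_uv lt_cd lt_uc; rewrite tpermJ.
have -> : tperm c d u = u.
  by apply: tpermD; apply/eqP => eq_u; move: lt_uc lt_cd; rewrite eq_u; lia.
by apply: tmin_tperm; case: tpermP => [_|_|_ _]; lia.
Qed.

(* Conjugation by (c d) does not change the union {c, d} U {u, v}: a point
   outside {c, d} is fixed by (c d), so it equals (c d) u iff it equals u. *)
Lemma mem_conj_support u v c d :
  [:: c; d; tperm c d u; tperm c d v] =i [:: u; v; c; d].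
Proof.
move=> z; rewrite !inE; case: (tpermP c d z) => [->|->|/eqP ncz /eqP ndz].
- by rewrite eqxx !orbT.
- by rewrite eqxx !orbT.
have tz : tperm c d z = z by apply: tpermD; rewrite eq_sym.
by rewrite (negbTE ncz) (negbTE ndz) -{1 2}tz !(inj_eq perm_inj) !orbF.
Qed.

Lemma mem_tminmax u v : u != v ->
  [:: tmin (tperm u v); tmax (tperm u v)] =i [:: val u; val v].
Proof.
move=> neq_uv x; rewrite !inE; case: (ltngtP u v) => [lt_uv|lt_vu|eq_uv].
- by rewrite tmin_tperm ?tmax_tperm.
- by rewrite tpermC tmin_tperm ?tmax_tperm // orbC.
- by move: neq_uv; rewrite (val_inj eq_uv) eqxx.
Qed.

Lemma tsupp_pair_cat (X Y : {perm 'I_n}) :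
  tsupp [:: X; Y] = [:: tmin X; tmax X] ++ [:: tmin Y; tmax Y].
Proof. by []. Qed.

Lemma tsupp_pairC (X Y : {perm 'I_n}) : tsupp [:: X; Y] =i tsupp [:: Y; X].
Proof. by move=> x; rewrite !tsupp_pair_cat !mem_cat orbC. Qed.

(* Replacing (X, Y) by (Y, X^Y) does not change the support; this covers
   beta_l, and beta_l^-1 after exchanging the roles of X and Y. *)
Lemma tsupp_conj (X Y : {perm 'I_n}) : is_transp X -> is_transp Y ->
  tsupp [:: X; Y] =i tsupp [:: Y; X ^ Y].
Proof.
case/is_transpP=> u [v [lt_uv ->]] /is_transpP [c [d [lt_cd ->]]] x.
have neq_uv := ord_ltn_neq lt_uv; have neq_cd := ord_ltn_neq lt_cd.
have neq_t : tperm c d u != tperm c d v by rewrite (inj_eq perm_inj).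
rewrite tpermJ !tsupp_pair_cat !mem_cat !mem_tminmax //.
rewrite -!mem_cat -!/(map val [:: _; _]) -!map_cat.
by rewrite (eq_mem_map _ (mem_conj_support u v c d)).
Qed.

End Transpositions.

Definition sigma_pair n (X Y : {perm 'I_n}) : {perm 'I_n} * {perm 'I_n} :=
  if tmin X == tmin Y then (X, Y)
  else if (tmin X < tmin Y)%N then (Y, X ^ Y^-1) else (Y ^ X, X).

Record hurwitz_pair n (X Y X' Y' : {perm 'I_n}) : Prop := HurwitzPair {
  hurwitz_transpl : is_transp X';
  hurwitz_transpr : is_transp Y';
  hurwitz_prod : Y' * X' = Y * X;
  hurwitz_tminl : tmin X' = tmin Y;
  hurwitz_tminr : tmin Y' = tmin X;
  hurwitz_tsupp : tsupp [:: X; Y] =i tsupp [:: X'; Y'] }.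

Lemma sigma_pair_hurwitz n (X Y : {perm 'I_n}) : is_transp X -> is_transp Y ->
  hurwitz_pair X Y (sigma_pair X Y).1 (sigma_pair X Y).2.
Proof.
move=> tX tY; have [u [v [lt_uv eX]]] := is_transpP tX.
have [c [d [lt_cd eY]]] := is_transpP tY.
subst X Y; rewrite /sigma_pair !tmin_tperm //.
case: (ltngtP u c) => [lt_uc|lt_cu|/val_inj eq_uc] /=.
- rewrite tpermV; split=> //.
  + exact: is_transp_conj.
  + by rewrite conjgE tpermV -!mulgA tperm2 mulg1.
  + by rewrite tmin_conj // tmin_tperm.
  + exact: tsupp_conj.
- split=> //.
  + exact: is_transp_conj.
  + by rewrite conjgE mulgA mulgV mul1g.
  + by rewrite tmin_conj // tmin_tperm.
  + by move=> x; rewrite tsupp_pairC tsupp_conj // tsupp_pairC.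
- by split=> //; rewrite !tmin_tperm // eq_uc.
Qed.

Lemma split_pair T (x0 : T) (s : seq T) l : (l.+1 < size s)%N ->
  exists pre a b post, s = pre ++ a :: b :: post /\ size pre = l.
Proof.
move=> lt_l1; exists (take l s), (nth x0 s l), (nth x0 s l.+1), (drop l.+2 s).
rewrite size_take ltnW //; split=> //.
by rewrite -(drop_nth x0) // -(drop_nth x0) ?cat_take_drop // ltnW.
Qed.

Lemma nth_pairl T (x0 : T) pre a b post : nth x0 (pre ++ a :: b :: post) (size pre) = a.
Proof. by rewrite nth_cat ltnn subnn. Qed.

Lemma nth_pairr T (x0 : T) pre a b post : nth x0 (pre ++ a :: b :: post) (size pre).+1 = b.
Proof. by rewrite nth_cat ltnNge leqnSn subSnn. Qed.

Lemma nth_swap T (x0 : T) pre a b post i : i != size pre -> i != (size pre).+1 ->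
  nth x0 (pre ++ a :: b :: post) i = nth x0 (pre ++ b :: a :: post) i.
Proof.
move=> neq_l neq_l1; rewrite !nth_cat; case: ltnP => // le_pre.
by case: (i - size pre) (subnKC le_pre) => [|[|m]] //= eq_i; move: neq_l neq_l1; lia.
Qed.

Lemma sact_swap T (x0 : T) k (l : 'I_k) (hl : (l.+1 < k)%N) pre a b post :
  size pre = l -> size (pre ++ a :: b :: post) = k ->
  sact x0 (tperm l (Ordinal hl)) (pre ++ a :: b :: post) = pre ++ b :: a :: post.
Proof.
move=> size_pre size_s; apply: (eq_from_nth (x0 := x0)).
  by rewrite size_map size_enum_ord -size_s !size_cat.
move=> i; rewrite size_map size_enum_ord => lt_ik.
rewrite (nth_map l) ?size_enum_ord // tpermV.
have := nth_enum_ord l lt_ik; set j := nth l (enum 'I_k) i => <-.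
case: tpermP => [->|->|/eqP neq_l /eqP neq_l1] /=; rewrite -?size_pre ?nth_pairl ?nth_pairr //.
by rewrite nth_swap // size_pre; [move: neq_l | move: neq_l1];
  apply: contra => /eqP eq_j; apply/eqP/val_inj.
Qed.

Section Sequences.
Variable n : nat.
Implicit Types (a b pre post : seq {perm 'I_n}) (X Y : {perm 'I_n}).

Lemma pprod_cat a b : Defs.pprod (a ++ b) = Defs.pprod b * Defs.pprod a.
Proof. by elim: a => [|x a IHa] /=; rewrite ?mulg1 // IHa mulgA. Qed.

Lemma tsupp_cat a b : tsupp (a ++ b) = tsupp a ++ tsupp b.
Proof. by rewrite /tsupp map_cat flatten_cat. Qed.

Lemma pprod_replace pre post X Y (X' Y' : {perm 'I_n}) : hurwitz_pair X Y X' Y' ->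
  Defs.pprod (pre ++ X' :: Y' :: post) = Defs.pprod (pre ++ X :: Y :: post).
Proof.
case=> _ _ prodXY _ _ _.
by rewrite !pprod_cat /= -!mulgA (mulgA Y) (mulgA Y') prodXY.
Qed.

Lemma Sigma_replace k pre post X Y (X' Y' : {perm 'I_n}) : hurwitz_pair X Y X' Y' ->
  Sigma k (pre ++ X :: Y :: post) -> Sigma k (pre ++ X' :: Y' :: post).
Proof.
move=> hXY [size_g all_transp len_g below_c]; have [tX' tY' _ _ _ _] := hXY.
have eq_prod := pprod_replace pre post hXY.
split; rewrite ?eq_prod //; first by rewrite -size_g !size_cat.
by move: all_transp; rewrite !all_cat /= tX' tY' => /andP [-> /and3P [_ _ ->]].
Qed.

Lemma P_replace k (l : 'I_k) (hl : (l.+1 < k)%N) pre post X Y (X' Y' : {perm 'I_n}) :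
  hurwitz_pair X Y X' Y' -> size pre = l -> size (pre ++ X :: Y :: post) = k ->
  P (pre ++ X' :: Y' :: post) = sact 0%N (tperm l (Ordinal hl)) (P (pre ++ X :: Y :: post)).
Proof.
case=> _ _ _ tminX' tminY' _ size_pre size_g.
rewrite /P !map_cat /= sact_swap ?size_map ?tminX' ?tminY' //.
by rewrite size_cat /= !size_map -size_g size_cat.
Qed.

Lemma tsupp_replace pre post X Y (X' Y' : {perm 'I_n}) : hurwitz_pair X Y X' Y' ->
  tsupp (pre ++ X :: Y :: post) =i tsupp (pre ++ X' :: Y' :: post).
Proof.
case=> _ _ _ _ _ tsuppXY x.
have tsupp_pair_post A B : tsupp (A :: B :: post) = tsupp [:: A; B] ++ tsupp post by [].
rewrite !(tsupp_cat pre) (tsupp_pair_post X) (tsupp_pair_post X') !(mem_cat x (tsupp pre)).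
by rewrite (mem_cat x (tsupp [:: X; Y])) (mem_cat x (tsupp [:: X'; Y'])) tsuppXY.
Qed.

End Sequences.

Lemma sigact_cat n (pre post : seq {perm 'I_n}) X Y :
  sigact (size pre) (pre ++ X :: Y :: post) =
  pre ++ (sigma_pair X Y).1 :: (sigma_pair X Y).2 :: post.
Proof.
have drop_post : drop (size pre).+2 (pre ++ X :: Y :: post) = post.
  by rewrite -addn2 addnC -drop_drop drop_size_cat //= drop0.
rewrite /sigact /beta /betainv /sigma_pair /Defs.pcomp !nth_pairl !nth_pairr.
rewrite take_size_cat // drop_post.
by case: ifP => // _; case: ifP => _; rewrite conjgE ?invgK mulgA.
Qed.

Theorem lemma4p1 (n k : nat) (g : seq {perm 'I_n}) (l : 'I_k) (hl : (l.+1 < k)%N) :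
  (1 <= n)%N -> (2 <= k)%N -> Sigma k g ->
  let sl : {perm 'I_k} := tperm l (Ordinal hl) in
  [/\ Sigma k (sigact l g),
      P (sigact l g) = sact 0%N sl (P g)
    & forall x : nat, (x \in tsupp g) = (x \in tsupp (sigact l g))].
Proof.
move=> _ _ Sg sl; rewrite {}/sl.
have [size_g all_transp _ _] := Sg.
have lt_l1 : (l.+1 < size g)%N by rewrite size_g.
have [pre [X [Y [post [eq_g size_pre]]]]] := split_pair 1 lt_l1; subst g.
move: all_transp; rewrite all_cat /= => /and3P [_ tX /andP [tY _]].
have hurwitzXY := sigma_pair_hurwitz tX tY.
have -> : sigact l (pre ++ X :: Y :: post) =
    pre ++ (sigma_pair X Y).1 :: (sigma_pair X Y).2 :: post by rewrite -size_pre sigact_cat.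
split.
- exact: Sigma_replace hurwitzXY Sg.
- by apply: P_replace; rewrite ?size_g.
- exact: tsupp_replace.
Qed.
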